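(* Let $n\ge1$ and $K=\ker(f_{\Delta_n}\circ f_{\Delta_n^*}^* )=\ker(f_{\Delta_n^*}\circ f_{\Delta_n}^* )\cong(\mathbb{Z}/(n+1))^n\subset\mathbb{T}^n$. Then the inclusion $f_{\Delta_n^*}^*(\mathbb{T}^n)\hookrightarrow\mathbb{T}^{n+1}$ induces a group isomorphism $f_{\Delta_n^*}^*(\mathbb{T}^n)/D_{\Delta_n}\cong \mathbb{T}^{n+1}/N_{\Delta_n}$, and $f_{\Delta_n^*}^*$ induces a group isomorphism $\mathbb{T}^n/K\cong f_{\Delta_n^*}^*(\mathbb{T}^n)/D_{\Delta_n}$. Symmetrically, the inclusion induces $f_{\Delta_n}^*(\mathbb{T}^n)/D_{\Delta_n^*}\cong\mathbb{T}^{n+1}/N_{\Delta_n^*}$ and $f_{\Delta_n}^*$ induces $\mathbb{T}^n/K\cong f_{\Delta_n}^*(\mathbb{T}^n)/D_{\Delta_n^*}$. In particular $D_{\Delta_n}$ and $D_{\Delta_n^*}$ are finite.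
   Context: Let $e_1,\dots,e_n$ be the standard basis of $\mathbb{R}^n$ and $\mathbf{1}=(1,\dots,1)\in\mathbb{R}^n$. Put $u_i=e_i$ for $1\le i\le n$, $u_{n+1}=-\mathbf{1}$, and $v_i=(n+1)e_i-\mathbf{1}$ for $1\le i\le n$, $v_{n+1}=-\mathbf{1}$. Define linear maps $F_{\Delta_n},F_{\Delta_n^*}:\mathbb{R}^{n+1}\to\mathbb{R}^n$ by $F_{\Delta_n}(x)=\sum_{i=1}^{n+1}x_iu_i$ and $F_{\Delta_n^*}(x)=\sum_{i=1}^{n+1}x_iv_i$, and their transposes $F_{\Delta_n}^*(y)=(u_1\cdot y,\dots,u_{n+1}\cdot y)$, $F_{\Delta_n^*}^*(y)=(v_1\cdot y,\dots,v_{n+1}\cdot y)$. Write $\mathbb{T}^k=\mathbb{R}^k/\mathbb{Z}^k$. These integer matrices induce group homomorphisms $f_{\Delta_n},f_{\Delta_n^*}:\mathbb{T}^{n+1}\to\mathbb{T}^n$ and $f_{\Delta_n}^*,f_{\Delta_n^*}^*:\mathbb{T}^n\to\mathbb{T}^{n+1}$. Let $N_{\Delta_n}=\ker f_{\Delta_n}$, $N_{\Delta_n^*}=\ker f_{\Delta_n^*}$, $D_{\Delta_n}=N_{\Delta_n}\cap f_{\Delta_n^*}^*(\mathbb{T}^n)$ and $D_{\Delta_n^*}=N_{\Delta_n^*}\cap f_{\Delta_n}^*(\mathbb{T}^n)$. *)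

From HB Require Import structures.
From mathcomp Require Import all_boot all_order all_algebra.
From mathcomp Require Import reals.
Set Implicit Arguments. Unset Strict Implicit. Unset Printing Implicit Defensive.
Import Order.TTheory GRing.Theory Num.Theory.
Local Open Scope ring_scope.

(* Points of T^k = R^k/Z^k are represented by real vectors x : 'I_k -> R;
   two representatives give the same point of T^k iff their difference is
   in Z^k (relation [teq]).  Subsets of T^k are predicates on representatives
   that are invariant under [teq]. *)

(* integer coefficient matrices: c i j = j-th coordinate of u_i (resp. v_i) *)
Definition uD (n : nat) (i : 'I_n.+1) (j : 'I_n) : int :=
  if (val i < n)%N then ((val i == val j) : nat)%:Z else -1.
Definition vD (n : nat) (i : 'I_n.+1) (j : 'I_n) : int :=
  if (val i < n)%N then (n.+1)%:Z * ((val i == val j) : nat)%:Z - 1 else -1.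

Arguments uD : clear implicits.
Arguments vD : clear implicits.

Section Torus.
Variable R : realType.

Definition vadd k (x y : 'I_k -> R) : 'I_k -> R := fun i => x i + y i.
Definition vsub k (x y : 'I_k -> R) : 'I_k -> R := fun i => x i - y i.

Definition isint_vec k (x : 'I_k -> R) : Prop := forall i, x i \is a Num.int.
Definition teq k (x y : 'I_k -> R) : Prop := isint_vec (vsub x y).

Definition Fmap n (c : 'I_n.+1 -> 'I_n -> int) (x : 'I_n.+1 -> R) : 'I_n -> R :=
  fun j => \sum_(i < n.+1) (c i j)%:~R * x i.
Definition Ftr n (c : 'I_n.+1 -> 'I_n -> int) (y : 'I_n -> R) : 'I_n.+1 -> R :=
  fun i => \sum_(j < n) (c i j)%:~R * y j.

Definition Nker n (c : 'I_n.+1 -> 'I_n -> int) (x : 'I_n.+1 -> R) : Prop :=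
  isint_vec (Fmap c x).
Definition Img n (c : 'I_n.+1 -> 'I_n -> int) (x : 'I_n.+1 -> R) : Prop :=
  exists y : 'I_n -> R, teq x (Ftr c y).
Definition Dset n (cN cI : 'I_n.+1 -> 'I_n -> int) (x : 'I_n.+1 -> R) : Prop :=
  Nker cN x /\ Img cI x.
Definition Kset n (c1 c2 : 'I_n.+1 -> 'I_n -> int) (y : 'I_n -> R) : Prop :=
  isint_vec (Fmap c1 (Ftr c2 y)).

(* The map phi : R^k -> R^l (a homomorphism of tori, i.e. compatible with
   Z^k/Z^l) induces a group isomorphism A/H ≅ B/M, where H <= A are subgroups
   of T^k and M <= B subgroups of T^l: phi is well defined on tori, additive
   on tori, maps A into B, the induced map A -> B/M is surjective and its
   kernel is exactly H. *)
Definition induced_iso k l (A H : ('I_k -> R) -> Prop) (B M : ('I_l -> R) -> Prop)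
    (phi : ('I_k -> R) -> ('I_l -> R)) : Prop :=
  [/\ forall x y, teq x y -> teq (phi x) (phi y),
      forall x y, teq (phi (vadd x y)) (vadd (phi x) (phi y)),
      forall x, A x -> B (phi x),
      forall z, B z -> exists2 x, A x & M (vsub z (phi x))
    & forall x, A x -> (M (phi x) <-> H x)].

Definition iso_onto n m (psi : ('I_n -> 'Z_m) -> ('I_n -> R))
    (K : ('I_n -> R) -> Prop) : Prop :=
  [/\ forall a b, teq (psi (fun i => a i + b i)) (vadd (psi a) (psi b)),
      forall a, K (psi a),
      forall a b, teq (psi a) (psi b) -> forall i, a i = b i
    & forall y, K y -> exists a, teq y (psi a)].

Definition torus_finite k (S : ('I_k -> R) -> Prop) : Prop :=
  exists m (z : 'I_m -> ('I_k -> R)), forall x, S x -> exists j, teq x (z j).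

End Torus.

From HB Require Import structures.
From mathcomp Require Import all_boot all_order all_algebra.
From mathcomp Require Import reals.
From mathcomp Require Import zify ring.
Set Implicit Arguments. Unset Strict Implicit. Unset Printing Implicit Defensive.
Import Order.TTheory GRing.Theory Num.Theory.
Local Open Scope ring_scope.

(* Both composites F_{Delta_n} o F_{Delta_n^*}^* and F_{Delta_n^*} o F_{Delta_n}^*
   are multiplication by n+1 on R^n.  Hence K is the (n+1)-torsion of T^n,
   which is (Z/(n+1))^n, and D_{Delta_n} lies in the (n+1)-torsion of T^{n+1},
   so it is finite.  A point z of T^{n+1} is congruent modulo N_{Delta_n} to the
   point F_{Delta_n^*}^*(F_{Delta_n}(z)/(n+1)) of the image, so the inclusion is
   onto T^{n+1}/N_{Delta_n}; its kernel is D_{Delta_n} by definition, and that of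
   f_{Delta_n^*}^* : T^n -> image/D_{Delta_n} is K. *)

Section Torus.
Variable R : realType.

Definition torsion k (m : nat) (y : 'I_k -> R) : Prop :=
  forall j, m%:R * y j \is a Num.int.

Lemma frac_rep (m : nat) (r : R) : (0 < m)%N -> m%:R * r \is a Num.int ->
  exists a : 'I_m, r - (val a)%:R / m%:R \is a Num.int.
Proof.
move=> m_gt0 /intrP [k mr_eq].
have m_neq0 : (m%:R : R) != 0 by rewrite pnatr_eq0 -lt0n.
have r_eq : r = k%:~R / m%:R by rewrite -mr_eq mulrC mulKf.
have k_mod_ge0 : (0 <= (k %% m)%Z) by apply: modz_ge0; rewrite eqz_nat -lt0n.
have k_mod_abs : (absz (k %% m)%Z)%:Z = (k %% m)%Z by rewrite gez0_abs.
have k_mod_lt : (absz (k %% m)%Z < m)%N.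
  by rewrite -ltz_nat k_mod_abs ltz_pmod // ltz_nat.
exists (Ordinal k_mod_lt); rewrite r_eq; apply/intrP; exists (k %/ m)%Z => /=.
rewrite {1}(divz_eq k m) rmorphD rmorphM /= -k_mod_abs.
rewrite -[((absz _)%:Z)%:~R]/((absz (k %% m)%Z)%:R : R) -[(m%:Z)%:~R]/(m%:R : R).
by field.
Qed.

Lemma frac_inj (m : nat) (a b : 'I_m) :
  (val a)%:R / m%:R - (val b)%:R / m%:R \is a @Num.int R -> a = b.
Proof.
move=> /intrP [z z_eq].
have m_neq0 : (m%:R : R) != 0 by case: m a {b z_eq} => [[]|] //= m _; rewrite pnatr_eq0.
have ab_eq : ((val a)%:Z - (val b)%:Z = z * m%:Z)%R.
  apply: (@intr_inj R); rewrite rmorphB rmorphM /= -z_eq.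
  rewrite -[((val a)%:Z)%:~R]/((val a)%:R : R) -[((val b)%:Z)%:~R]/((val b)%:R : R).
  by rewrite -[(m%:Z)%:~R]/(m%:R : R); field.
apply: val_inj; case: a b ab_eq {z_eq} => [x x_lt] [y y_lt] /=.
by case: z => [[|k]|k]; rewrite ?NegzE; nia.
Qed.

Lemma frac_addn (m x y : nat) : (0 < m)%N ->
  ((x + y) %% m)%N%:R / m%:R - (x%:R / m%:R + y%:R / m%:R) \is a @Num.int R.
Proof.
move=> m_gt0; have m_neq0 : (m%:R : R) != 0 by rewrite pnatr_eq0 -lt0n.
have xy_eq : (x%:R + y%:R : R) = ((x + y) %/ m)%N%:R * m%:R + ((x + y) %% m)%N%:R.
  by rewrite -natrD {1}(divn_eq (x + y) m) natrD natrM.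
apply/intrP; exists (- (((x + y) %/ m)%N)%:Z).
rewrite -mulrDl xy_eq rmorphN /= -[((((x + y) %/ m)%N)%:Z)%:~R]/((((x + y) %/ m)%N)%:R : R).
by field.
Qed.

Lemma sum_kronecker n (F : 'I_n -> R) (j : 'I_n) :
  \sum_(i < n) (((val i == val j) : nat)%:Z)%:~R * F i = F j.
Proof.
rewrite (bigD1 j) //= eqxx mul1r big1 ?addr0 // => i /negbTE.
by rewrite -val_eqE => ->; rewrite mul0r.
Qed.

Section Coordinates.
Variable n : nat.
Local Notation wide j := (widen_ord (leqnSn n) j).

Lemma Fmap_uD (x : 'I_n.+1 -> R) j : Fmap (uD n) x j = x (wide j) - x ord_max.
Proof.
rewrite /Fmap big_ord_recr /= /uD /= ltnn mulN1r.
rewrite -(@sum_kronecker n (fun i => x (wide i)) j).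
by congr (_ - _); apply: eq_bigr => i _; rewrite ltn_ord.
Qed.

Lemma Fmap_vD (x : 'I_n.+1 -> R) j :
  Fmap (vD n) x j = n.+1%:R * x (wide j) - \sum_i x i.
Proof.
rewrite /Fmap big_ord_recr [in RHS]big_ord_recr /= /vD /= ltnn mulN1r opprD addrA.
congr (_ - _); rewrite -(@sum_kronecker n (fun i => x (wide i)) j) mulr_sumr -sumrB.
apply: eq_bigr => i _; rewrite ltn_ord rmorphB /= rmorphM /= mulrBl mul1r mulrA.
by rewrite -[(n.+1)%:Z%:~R]/(n.+1%:R : R).
Qed.

Lemma Ftr_uD (y : 'I_n -> R) i : Ftr (uD n) y (wide i) = y i.
Proof.
rewrite /Ftr /uD /= ltn_ord -sum_kronecker.
by apply: eq_bigr => j _; rewrite eq_sym.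
Qed.

Lemma Ftr_vD (y : 'I_n -> R) i :
  Ftr (vD n) y (wide i) = n.+1%:R * y i - \sum_j y j.
Proof.
rewrite /Ftr /vD /= ltn_ord -sum_kronecker mulr_sumr -sumrB.
apply: eq_bigr => j _; rewrite eq_sym rmorphB /= rmorphM /= mulrBl mul1r mulrA.
by rewrite -[(n.+1)%:Z%:~R]/(n.+1%:R : R).
Qed.

Lemma Ftr_ord_max c (y : 'I_n -> R) :
  (forall j, c ord_max j = -1) -> Ftr c y ord_max = - \sum_j y j.
Proof. by move=> c_max; rewrite /Ftr -sumrN; apply: eq_bigr => j _; rewrite c_max mulN1r. Qed.

Lemma Fmap_uD_Ftr_vD (y : 'I_n -> R) j : Fmap (uD n) (Ftr (vD n) y) j = n.+1%:R * y j.
Proof. by rewrite Fmap_uD Ftr_vD Ftr_ord_max ?opprK ?subrK // => i; rewrite /vD ltnn. Qed.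

Lemma Fmap_vD_Ftr_uD (y : 'I_n -> R) j : Fmap (vD n) (Ftr (uD n) y) j = n.+1%:R * y j.
Proof.
have sum_Ftr_uD : \sum_i Ftr (uD n) y i = 0.
  rewrite big_ord_recr /= Ftr_ord_max => [|i]; last by rewrite /uD ltnn.
  by rewrite (eq_bigr y) ?subrr // => i _; exact: Ftr_uD.
by rewrite Fmap_vD sum_Ftr_uD subr0 Ftr_uD.
Qed.

End Coordinates.

Lemma teq_refl k (x : 'I_k -> R) : teq x x.
Proof. by move=> i; rewrite /vsub subrr. Qed.

Lemma Fmap_sub n c (x y : 'I_n.+1 -> R) j :
  Fmap c (vsub x y) j = Fmap c x j - Fmap c y j.
Proof. by rewrite /Fmap -sumrB; apply: eq_bigr => i _; rewrite mulrBr. Qed.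

Lemma Ftr_sub n c (x y : 'I_n -> R) i :
  Ftr c (vsub x y) i = Ftr c x i - Ftr c y i.
Proof. by rewrite /Ftr -sumrB; apply: eq_bigr => j _; rewrite mulrBr. Qed.

Lemma Ftr_add n c (x y : 'I_n -> R) i :
  Ftr c (vadd x y) i = Ftr c x i + Ftr c y i.
Proof. by rewrite /Ftr -big_split; apply: eq_bigr => j _; rewrite mulrDr. Qed.

Lemma Fmap_int n c (x : 'I_n.+1 -> R) : isint_vec x -> isint_vec (Fmap c x).
Proof. by move=> x_int j; apply: rpred_sum => i _; rewrite rpredM ?intr_int. Qed.

Lemma Ftr_int n c (y : 'I_n -> R) : isint_vec y -> isint_vec (Ftr c y).
Proof. by move=> y_int i; apply: rpred_sum => j _; rewrite rpredM ?intr_int. Qed.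

Lemma teq_Ftr n c (x y : 'I_n -> R) : teq x y -> teq (Ftr c x) (Ftr c y).
Proof. by move=> xy i; rewrite /vsub -Ftr_sub; exact: Ftr_int. Qed.

Lemma torsion_teq k m (x y : 'I_k -> R) : teq x y -> torsion m y -> torsion m x.
Proof.
move=> xy y_tor i; rewrite -(subrK (y i) (x i)) mulrDr.
by rewrite rpredD ?(y_tor i) // rpredM ?natr_int //; exact: xy.
Qed.

Lemma torsion_Ftr n c m (y : 'I_n -> R) : torsion m y -> torsion m (Ftr c y).
Proof.
move=> y_tor i; rewrite /Ftr mulr_sumr; apply: rpred_sum => j _.
by rewrite mulrCA rpredM ?intr_int.
Qed.

Lemma torus_finite_sub k (S T : ('I_k -> R) -> Prop) :
  (forall x, S x -> T x) -> torus_finite T -> torus_finite S.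
Proof. by move=> ST [m [z zT]]; exists m, z => x /ST; exact: zT. Qed.

(* The m-torsion points are the classes of the vectors a/m with a : 'I_k -> 'I_m. *)
Lemma torsion_finite k m : (0 < m)%N -> torus_finite (torsion (k:=k) m).
Proof.
move=> m_gt0; pose N := #|{ffun 'I_k -> 'I_m}|.
exists N, (fun r : 'I_N => fun i => (val (enum_val r i))%:R / m%:R) => x x_tor.
have rep i : exists a : 'I_m, x i - (val a)%:R / m%:R \is a Num.int.
  exact: frac_rep m_gt0 (x_tor i).
exists (enum_rank [ffun i => xchoose (rep i)]) => i.
by rewrite /vsub enum_rankK ffunE; exact: xchooseP (rep i).
Qed.

Lemma Img_int n c (x : 'I_n.+1 -> R) : isint_vec x -> Img c x.
Proof.
move=> x_int; exists (fun _ => 0) => i; rewrite /vsub /Ftr big1 ?subr0 //.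
by move=> j _; rewrite mulr0.
Qed.

Lemma Ftr_induced_iso n (cN c : 'I_n.+1 -> 'I_n -> int) (H : ('I_n -> R) -> Prop) :
  (forall y, H y <-> Kset cN c y) ->
  induced_iso (fun _ => True) H (Img c) (Dset cN c) (Ftr c).
Proof.
move=> HK; split.
- by move=> x y; exact: teq_Ftr.
- by move=> x y i; rewrite /vsub Ftr_add subrr.
- by move=> y _; exists y; exact: teq_refl.
- move=> z [y zy]; exists y => //; split; first exact: Fmap_int.
  exact: Img_int.
- move=> y _; rewrite HK; split=> [[]//| y_K]; split=> //.
  by exists y; exact: teq_refl.
Qed.

Section Duality.
Variables (n m : nat) (c1 c2 : 'I_n.+1 -> 'I_n -> int).
Hypothesis m_gt0 : (0 < m)%N.
Hypothesis Fmap_Ftr : forall (y : 'I_n -> R) j, Fmap c1 (Ftr c2 y) j = m%:R * y j.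

Lemma Kset_torsion (y : 'I_n -> R) : Kset c1 c2 y <-> torsion m y.
Proof. by split=> y_tor j; move: (y_tor j); rewrite Fmap_Ftr. Qed.

Lemma Img_induced_iso :
  induced_iso (Img (R:=R) c2) (Dset c1 c2) (fun _ => True) (Nker c1) id.
Proof.
have m_neq0 : (m%:R : R) != 0 by rewrite pnatr_eq0 -lt0n.
split=> //.
- by move=> x y; exact: teq_refl.
- move=> z _; pose y j := Fmap c1 z j / m%:R.
  exists (Ftr c2 y); first by exists y; exact: teq_refl.
  by move=> j; rewrite Fmap_sub Fmap_Ftr mulrC divfK // subrr.
- by move=> x x_Img; split=> [|[]//]; split.
Qed.

Lemma Dset_finite : torus_finite (Dset (R:=R) c1 c2).
Proof.
apply: torus_finite_sub (torsion_finite n.+1 m_gt0) => x [x_N [y xy]].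
apply: (torsion_teq xy (torsion_Ftr _ _)); apply/Kset_torsion => j.
rewrite -(subrK (Fmap c1 x j) (Fmap c1 (Ftr c2 y) j)) -opprB -Fmap_sub.
by rewrite rpredD ?rpredN ?(x_N j) ?(Fmap_int _ xy).
Qed.

End Duality.

Definition frac_vec n m (a : 'I_n -> 'Z_m.+2) : 'I_n -> R :=
  fun i => (val (a i))%:R / m.+2%:R.

Lemma frac_vec_iso_onto n m (K : ('I_n -> R) -> Prop) :
  (forall y, K y <-> torsion m.+2 y) -> iso_onto (@frac_vec n m) K.
Proof.
move=> K_tor; split.
- (* 'Z_m.+2 is 'I_m.+2, where val (a + b) computes to (a + b) %% m.+2 *)
  by move=> a b i; exact: frac_addn.
- by move=> a; apply/K_tor => j; rewrite /frac_vec mulrC divfK ?natr_int ?pnatr_eq0.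
- by move=> a b ab i; exact: frac_inj (ab i).
- move=> y /K_tor y_tor.
  have rep i : exists a : 'I_m.+2, y i - (val a)%:R / m.+2%:R \is a Num.int.
    exact: frac_rep (y_tor i).
  by exists (fun i => xchoose (rep i)) => i; exact: xchooseP (rep i).
Qed.

End Torus.

Unset Implicit Arguments.
Theorem mainTheorem3 (R : realType) (n : nat) (hn : (1 <= n)%N) :
  (forall y : 'I_n -> R, Kset (uD n) (vD n) y <-> Kset (vD n) (uD n) y) /\
  (exists psi : ('I_n -> 'Z_(n.+1)) -> ('I_n -> R),
      iso_onto psi (Kset (uD n) (vD n))) /\
  induced_iso (Img (R:=R) (vD n)) (Dset (uD n) (vD n))
              (fun _ => True) (Nker (uD n)) id /\
  induced_iso (fun _ => True) (Kset (uD n) (vD n))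
              (Img (vD n)) (Dset (uD n) (vD n)) (Ftr (R:=R) (vD n)) /\
  induced_iso (Img (R:=R) (uD n)) (Dset (vD n) (uD n))
              (fun _ => True) (Nker (vD n)) id /\
  induced_iso (fun _ => True) (Kset (uD n) (vD n))
              (Img (uD n)) (Dset (vD n) (uD n)) (Ftr (R:=R) (uD n)) /\
  torus_finite (Dset (R:=R) (uD n) (vD n)) /\
  torus_finite (Dset (R:=R) (vD n) (uD n)).
Proof.
have uv := @Fmap_uD_Ftr_vD R n; have vu := @Fmap_vD_Ftr_uD R n.
have K_uv (y : 'I_n -> R) : Kset (uD n) (vD n) y <-> torsion n.+1 y := Kset_torsion uv y.
have K_vu (y : 'I_n -> R) : Kset (vD n) (uD n) y <-> torsion n.+1 y := Kset_torsion vu y.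
have K_sym (y : 'I_n -> R) : Kset (uD n) (vD n) y <-> Kset (vD n) (uD n) y.
  exact: iff_trans (K_uv y) (iff_sym (K_vu y)).
split; first exact: K_sym.
split.
  case: n hn {uv vu K_vu K_sym} K_uv => // n _ K_uv.
  by exists (@frac_vec R n.+1 n); exact: frac_vec_iso_onto.
split; first exact: Img_induced_iso (ltn0Sn n) uv.
split; first exact: Ftr_induced_iso (fun y => iff_refl _).
split; first exact: Img_induced_iso (ltn0Sn n) vu.
split; first exact: Ftr_induced_iso K_sym.
by split; [exact: Dset_finite (ltn0Sn n) uv | exact: Dset_finite (ltn0Sn n) vu].
Qed.
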